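(* Let $\varphi$ be a concave Orlicz function satisfying $\lim_{t\to0^+}\sup_{u\in(0,1]}\varphi(tu)/\varphi(u)=0$. Then $\lambda_\varphi$ is lattice $1$-concave; indeed $\sum_{j=1}^J\lambda_\varphi(f_j)\le\lambda_\varphi(\sum_{j=1}^Jf_j)$ for every finite family $(f_j)_{j=1}^J$ in $[0,\infty]^{\mathbb{N}}$.
   Context: An Orlicz function is a non-null, left-continuous, non-decreasing $\varphi\colon[0,\infty)\to[0,\infty)$ with $\lim_{t\to0^+}\varphi(t)=0$; set $\varphi(\infty)=\infty$. For $f=(a_n)\in[0,\infty]^{\mathbb{N}}$, $\lambda_\varphi(f)=\inf\{t>0:\sum_{n=1}^\infty\varphi(a_n/t)\le1\}$; under the stated limit condition this is a function quasi-norm over $\mathbb{N}$ (counting measure). A function quasi-norm $\lambda$ over $\mathbb{N}$ is lattice $1$-concave if there is $C$ with $\sum_{j=1}^J\lambda(f_j)\le C\lambda(\sum_{j=1}^Jf_j)$ for all finite families of nonnegative sequences. *)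

From HB Require Import structures.
From mathcomp Require Import all_boot all_order all_algebra.
From mathcomp Require Import all_classical all_reals all_analysis.
Set Implicit Arguments. Unset Strict Implicit. Unset Printing Implicit Defensive.
Import Order.TTheory GRing.Theory Num.Theory.
Import numFieldNormedType.Exports.
Local Open Scope classical_set_scope.
Local Open Scope ring_scope.

(* An Orlicz function phi : [0,oo) -> [0,oo), represented by phi : R -> R whose
   values off [0,oo) are irrelevant. *)
Definition orlicz_function (R : realType) (phi : R -> R) : Prop :=
  [/\ (forall t, 0 <= t -> 0 <= phi t),
      (exists t, 0 <= t /\ phi t != 0),
      (forall t, 0 < t -> phi x @[x --> t^'-] --> phi t),
      (forall s t, 0 <= s -> s <= t -> phi s <= phi t)
    & phi x @[x --> 0^'+] --> 0].

Definition concave_on_nonneg (R : realType) (phi : R -> R) : Prop :=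
  forall x y s, 0 <= x -> 0 <= y -> 0 <= s -> s <= 1 ->
    s * phi x + (1 - s) * phi y <= phi (s * x + (1 - s) * y).

Definition sup_ratio_vanishes (R : realType) (phi : R -> R) : Prop :=
  forall eps : R, 0 < eps -> exists delta : R, 0 < delta /\
    forall t u, 0 < t -> t < delta -> 0 < u -> u <= 1 ->
      phi (t * u) / phi u <= eps.

Definition phibar (R : realType) (phi : R -> R) (x : \bar R) : \bar R :=
  match x with
  | EFin r => (phi r)%:E
  | _ => +oo%E
  end.

(* lambda_phi(f) = inf { t > 0 : sum_n phi(a_n / t) <= 1 }  (inf of empty set = +oo) *)
Definition lambda_phi (R : realType) (phi : R -> R) (f : nat -> \bar R) : \bar R :=
  ereal_inf [set (t%:E)%E | t in [set t : R | 0 < t /\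
     (\sum_(0 <= n <oo) phibar phi (f n * (t^-1)%:E) <= 1)%E]].

Definition lattice_1_concave (R : realType) (lam : (nat -> \bar R) -> \bar R) : Prop :=
  exists C : R, forall (J : nat) (f : nat -> nat -> \bar R),
    (forall j n, (0 <= f j n)%E) ->
    (\sum_(j < J) lam (f j) <= C%:E * lam (fun n => \sum_(j < J) f j n))%E.

From HB Require Import structures.
From mathcomp Require Import all_boot all_order all_algebra.
From mathcomp Require Import all_classical all_reals all_analysis.
From mathcomp Require Import ring lra.
Set Implicit Arguments. Unset Strict Implicit. Unset Printing Implicit Defensive.
Import Order.TTheory GRing.Theory Num.Theory.
Import numFieldNormedType.Exports.
Local Open Scope ring_scope.

(* Concavity makes the perspective (x, t) |-> t phi(x / t) jointly
   concave, so for t = t1 + t2 the modular rho(h/t) = sum_n phi(h_n / t) of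
   h = f + g dominates the convex combination
   (t1/t) rho(f/t1) + (t2/t) rho(g/t2). If t is admissible for f + g but
   t < lambda(f) + lambda(g), splitting t proportionally into t1 < lambda(f)
   and t2 < lambda(g) makes both modulars, hence their combination, exceed 1:
   a contradiction. *)

Section LuxemburgSuperadditive.
Variables (R : realType) (phi : R -> R).
Hypothesis phi_ge0 : forall t, 0 <= t -> 0 <= phi t.
Hypothesis phi_nondecreasing : forall s t, 0 <= s -> s <= t -> phi s <= phi t.
Hypothesis phi_concave : concave_on_nonneg phi.

Local Open Scope ereal_scope.

Definition orlicz_modular (f : nat -> \bar R) (t : R) : \bar R :=
  \sum_(0 <= n <oo) phibar phi (f n * (t^-1)%:E).

Lemma phibar_ge0 x : 0 <= x -> 0 <= phibar phi x.
Proof. by case: x => [x||] //= x0; rewrite lee_fin phi_ge0. Qed.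

Lemma phibar_le x y : 0 <= x -> x <= y -> phibar phi x <= phibar phi y.
Proof.
case: x => [x||] //; case: y => [y||] //= x0 xy; rewrite ?leey // lee_fin.
by apply: phi_nondecreasing; rewrite -lee_fin.
Qed.

Lemma phibar_mul_inv_ge0 x (t : R) : 0 <= x -> (0 < t)%R ->
  0 <= phibar phi (x * (t^-1)%:E).
Proof.
by move=> x0 t0; apply/phibar_ge0/mule_ge0; rewrite // lee_fin invr_ge0 ltW.
Qed.

Lemma orlicz_modular_le f g (t : R) : (0 < t)%R ->
  (forall n, 0 <= f n) -> (forall n, f n <= g n) ->
  orlicz_modular f t <= orlicz_modular g t.
Proof.
move=> t0 f0 fg; apply: lee_nneseries => [n _ _|n _].
  exact: phibar_mul_inv_ge0.
apply: phibar_le; first by apply: mule_ge0; rewrite // lee_fin invr_ge0 ltW.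
by apply: lee_wpmul2r; rewrite // lee_fin invr_ge0 ltW.
Qed.

Lemma phibar_perspective_concave x y (t1 t2 : R) :
  0 <= x -> 0 <= y -> (0 < t1)%R -> (0 < t2)%R ->
  (t1 / (t1 + t2))%:E * phibar phi (x * (t1^-1)%:E)
    + (t2 / (t1 + t2))%:E * phibar phi (y * (t2^-1)%:E)
  <= phibar phi ((x + y) * ((t1 + t2)^-1)%:E).
Proof.
move=> + + t10 t20; have t0 : (0 < t1 + t2)%R by rewrite addr_gt0.
case: x => [x||] //; case: y => [y||] // x0 y0.
  rewrite -EFinD -!EFinM /= -EFinD lee_fin.
  rewrite !lee_fin in x0 y0.
  have -> : (t2 / (t1 + t2) = 1 - t1 / (t1 + t2))%R.
    by field; rewrite gt_eqF.
  have -> : ((x + y) * (t1 + t2)^-1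
      = t1 / (t1 + t2) * (x * t1^-1) + (1 - t1 / (t1 + t2)) * (y * t2^-1))%R.
    by field; rewrite !gt_eqF.
  apply: phi_concave.
  - exact: divr_ge0 x0 (ltW t10).
  - exact: divr_ge0 y0 (ltW t20).
  - exact: divr_ge0 (ltW t10) (ltW t0).
  - by rewrite ler_pdivrMr // mul1r lerDl ltW.
all: apply: le_trans (leey _) _.
all: by rewrite ?addey ?addye // mulyr gtr0_sg ?invr_gt0 // mul1e.
Qed.

Lemma orlicz_modular_perspective_concave f g (t1 t2 : R) :
  (forall n, 0 <= f n) -> (forall n, 0 <= g n) -> (0 < t1)%R -> (0 < t2)%R ->
  (t1 / (t1 + t2))%:E * orlicz_modular f t1
    + (t2 / (t1 + t2))%:E * orlicz_modular g t2
  <= orlicz_modular (fun n => f n + g n) (t1 + t2).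
Proof.
move=> f0 g0 t10 t20; have t0 := addr_gt0 t10 t20.
have w1 : 0 <= (t1 / (t1 + t2))%:E by rewrite lee_fin divr_ge0 // ltW.
have w2 : 0 <= (t2 / (t1 + t2))%:E by rewrite lee_fin divr_ge0 // ltW.
have fn0 n := phibar_mul_inv_ge0 (f0 n) t10.
have gn0 n := phibar_mul_inv_ge0 (g0 n) t20.
rewrite /orlicz_modular -!nneseriesZl // -nneseriesD => [|n _ _|n _ _];
  rewrite ?mule_ge0 //.
apply: lee_nneseries => [n _ _|n _]; last exact: phibar_perspective_concave.
by rewrite adde_ge0 // mule_ge0.
Qed.

Lemma lambda_phi_ge0 f : 0 <= lambda_phi phi f.
Proof. by apply: le_ereal_inf_tmp => _ [t [t0 _] <-]; rewrite lee_fin ltW. Qed.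

Lemma lambda_phi_le f (t : R) : (0 < t)%R ->
  orlicz_modular f t <= 1 -> lambda_phi phi f <= t%:E.
Proof. by move=> t0 ft; apply: ereal_inf_lbound; exists t. Qed.

Lemma orlicz_modular_gt1 f (t : R) : (0 < t)%R ->
  t%:E < lambda_phi phi f -> 1 < orlicz_modular f t.
Proof.
by move=> t0; apply: contraTT; rewrite -!leNgt; exact: lambda_phi_le.
Qed.

Lemma le_lambda_phi f g : (forall n, 0 <= f n) -> (forall n, f n <= g n) ->
  lambda_phi phi f <= lambda_phi phi g.
Proof.
move=> f0 fg; apply: ereal_inf_le_tmp => _ [t [t0 gt] <-].
by exists t => //; split=> //; apply: le_trans gt; exact: orlicz_modular_le.
Qed.

Lemma lambda_phi_split f g (t1 t2 : R) :
  (forall n, 0 <= f n) -> (forall n, 0 <= g n) -> (0 < t1)%R -> (0 < t2)%R ->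
  orlicz_modular (fun n => f n + g n) (t1 + t2) <= 1 ->
  lambda_phi phi f <= t1%:E \/ lambda_phi phi g <= t2%:E.
Proof.
move=> f0 g0 t10 t20 fg1.
have [|ft1] := leP (lambda_phi phi f) t1%:E; first by left.
have [|gt2] := leP (lambda_phi phi g) t2%:E; first by right.
have t0 : (0 < t1 + t2)%R by rewrite addr_gt0.
have weights1 : (t1 / (t1 + t2))%:E + (t2 / (t1 + t2))%:E = 1.
  by rewrite -EFinD -mulrDl divff ?gt_eqF.
suff : 1 < 1 :> \bar R by rewrite ltxx.
apply: lt_le_trans fg1; apply: lt_le_trans (orlicz_modular_perspective_concave
  f0 g0 t10 t20); rewrite -[X in X < _]weights1.
by apply: lteD; rewrite -[X in X < _]mule1 lte_pmul2l ?lte_fin ?divr_gt0 //;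
  exact: orlicz_modular_gt1.
Qed.

Lemma lambda_phi_superadditive f g :
  (forall n, 0 <= f n) -> (forall n, 0 <= g n) ->
  lambda_phi phi f + lambda_phi phi g <= lambda_phi phi (fun n => f n + g n).
Proof.
move=> f0 g0; apply: le_ereal_inf_tmp => _ [t [t0 fgt] <-].
have fg0 n : 0 <= f n + g n by rewrite adde_ge0.
have ft : lambda_phi phi f <= t%:E.
  apply: le_trans (lambda_phi_le t0 fgt).
  by apply: le_lambda_phi => // n; rewrite leeDl.
have gt : lambda_phi phi g <= t%:E.
  apply: le_trans (lambda_phi_le t0 fgt).
  by apply: le_lambda_phi => // n; rewrite leeDr.
have := lambda_phi_split f0 g0; move: ft gt (lambda_phi_ge0 f) (lambda_phi_ge0 g).
case: (lambda_phi phi f) => [a||] //; case: (lambda_phi phi g) => [b||] //.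
rewrite !lee_fin => a_le b_le a0 b0 lambda_split.
rewrite leNgt; apply/negP => tab.
have a_gt0 : (0 < a)%R by lra.
have b_gt0 : (0 < b)%R by lra.
have ab0 : (0 < a + b)%R by lra.
have tsplit : (t * a / (a + b) + t * b / (a + b) = t)%R.
  by field; rewrite gt_eqF.
have := lambda_split _ _ (divr_gt0 (mulr_gt0 t0 a_gt0) ab0)
  (divr_gt0 (mulr_gt0 t0 b_gt0) ab0).
by rewrite tsplit !lee_fin !ler_pdivlMr // => /(_ fgt) []; nra.
Qed.

Lemma lambda_phi_sum_superadditive J (f : nat -> nat -> \bar R) :
  (forall j n, 0 <= f j n) ->
  \sum_(j < J) lambda_phi phi (f j) <= lambda_phi phi (fun n => \sum_(j < J) f j n).
Proof.
move=> f0; elim: J => [|J IH]; first by rewrite big_ord0 lambda_phi_ge0.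
under [X in _ <= lambda_phi _ X]funext => n do rewrite big_ord_recr.
rewrite big_ord_recr /=; apply: le_trans (lambda_phi_superadditive _ _) => //.
- by rewrite leeD2r.
- by move=> n; rewrite sume_ge0.
Qed.

End LuxemburgSuperadditive.

Theorem proposition4p16 (R : realType) (phi : R -> R) :
  orlicz_function phi ->
  concave_on_nonneg phi ->
  sup_ratio_vanishes phi ->
  lattice_1_concave (lambda_phi phi) /\
  (forall (J : nat) (f : nat -> nat -> \bar R),
     (forall j n, (0 <= f j n)%E) ->
     (\sum_(j < J) lambda_phi phi (f j)
        <= lambda_phi phi (fun n => \sum_(j < J) f j n))%E).
Proof.
(* Left-continuity, phi(0+) = 0 and the vanishing ratio condition are only
   needed for lambda_phi to be a quasi-norm, not for its superadditivity. *)
case=> phi_ge0 _ _ phi_nondecreasing _ phi_concave _.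
have superadditive := lambda_phi_sum_superadditive phi_ge0 phi_nondecreasing
  phi_concave.
by split=> //; exists 1%R => J f f0; rewrite mul1e; exact: superadditive.
Qed.
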